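(* Let $n\geq2$ be an integer, $b:=-n+i$, $D=\{0,m\}$ with $2\le m\le n^2$. Let $\alpha\in E_{n,D}$ and suppose there is exactly one sequence $(\alpha_j)_{j\ge1}$ with $\alpha_j\in\{0,\pm m\}$ and $\alpha=\sum_{j\ge1}\alpha_jb^{-j}$. Let $\gamma:=\sum_{j\ge1}\gamma_jb^{-j}$ where $\gamma_j:=\min(D\cap(D+\alpha_j))$. Then, with $C(\alpha):=C_{n,D}\cap(C_{n,D}+\alpha)$, $$C(\alpha)-\gamma=\Big\{\sum_{j\ge1}z_jb^{-j}: z_j\in D,\ z_j\le m-|\alpha_j|\text{ for all }j\Big\},$$ and $C(\alpha)-\gamma$ is a subset of $C_{n,D}$.
   Context: $C_{n,D}$ is the attractor of $\{z\mapsto b^{-1}(z+d): d\in D\}$, i.e. $C_{n,D}=\{\sum_{j\ge1}d_jb^{-j}: d_j\in D\}$. $E_{n,D}$ is the attractor of $\{z\mapsto b^{-1}(z+\delta):\delta\in D-D\}$, i.e. $E_{n,D}=\{\sum_{j\ge1}\delta_jb^{-j}:\delta_j\in D-D\}$. $X-\gamma=\{x-\gamma:x\in X\}$. *)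

From Stdlib Require Import Reals ZArith List.
From Coquelicot Require Import Coquelicot.
Import ListNotations.
Open Scope C_scope.

Definition base (n : nat) : C := (- INR n, 1)%R.

(* the value of the radix expansion sum_{j>=1} d_j b^{-j}; digits are integers,
   index shifted: d 0 is the digit d_1. *)
Definition radix_term (n : nat) (d : nat -> Z) (j : nat) : C :=
  RtoC (IZR (d j)) * Cpow (/ base n) (S j).

Definition has_expansion (n : nat) (d : nat -> Z) (z : C) : Prop :=
  is_series (radix_term n d) z.

Definition Dset (m : Z) : list Z := [0%Z; m].

Definition CnD (n : nat) (D : list Z) (z : C) : Prop :=
  exists d : nat -> Z, (forall j, In (d j) D) /\ has_expansion n d z.

Definition Ddiff (D : list Z) : list Z :=
  flat_map (fun x => map (fun y => (x - y)%Z) D) D.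

Definition EnD (n : nat) (D : list Z) (z : C) : Prop :=
  exists d : nat -> Z, (forall j, In (d j) (Ddiff D)) /\ has_expansion n d z.

(* minimum of a list of integers (default 0 on the empty list, never used here) *)
Definition Zlist_min (l : list Z) : Z :=
  match l with [] => 0%Z | x :: t => fold_right Z.min x t end.

Definition D_inter_shift (D : list Z) (a : Z) : list Z :=
  filter (fun d => existsb (fun d' => Z.eqb d (d' + a)) D) D.

Definition gamma_digit (D : list Z) (a : Z) : Z := Zlist_min (D_inter_shift D a).

Definition translate (S : C -> Prop) (a : C) (z : C) : Prop :=
  exists c, S c /\ z = c + a.

(* Write [x = sum d_j b^-j] and [x - alpha = sum d'_j b^-j] with digits in [D = {0, m}].
   Then [d_j - d'_j] lies in [{0, m, -m}] and expands [alpha], so by uniqueness it is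
   [alpha_j]. Hence [C(alpha)] consists exactly of the expansions whose digits [d_j]
   satisfy [d_j, d_j - alpha_j] in [D], and subtracting [gamma] digitwise turns this
   condition into [z_j in D, z_j <= m - |alpha_j|]. *)
From Stdlib Require Import Reals ZArith List Lia.
From Coquelicot Require Import Coquelicot.
Import ListNotations.
Open Scope C_scope.

Lemma has_expansion_plus n d d' x y :
  has_expansion n d x -> has_expansion n d' y ->
  has_expansion n (fun j => (d j + d' j)%Z) (x + y).
Proof.
  intros Hx Hy. eapply is_series_ext; [|exact (is_series_plus _ _ _ _ Hx Hy)].
  intros j. simpl. unfold radix_term. change (plus ?u ?v) with (u + v).
  rewrite plus_IZR, RtoC_plus. ring.
Qed.

Lemma has_expansion_minus n d d' x y :
  has_expansion n d x -> has_expansion n d' y ->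
  has_expansion n (fun j => (d j - d' j)%Z) (x - y).
Proof.
  intros Hx Hy. eapply is_series_ext; [|exact (is_series_minus _ _ _ _ Hx Hy)].
  intros j. simpl. unfold radix_term. change (plus ?u (opp ?v)) with (u - v).
  rewrite minus_IZR, RtoC_minus. ring.
Qed.

Lemma Dset_sub m d d' :
  In d (Dset m) -> In d' (Dset m) -> In (d - d')%Z [0%Z; m; (- m)%Z].
Proof. unfold Dset; simpl; lia. Qed.

Lemma gamma_digit_Dset m a : (0 < m)%Z -> In a [0%Z; m; (- m)%Z] ->
  gamma_digit (Dset m) a = (if Z.eqb a m then m else 0)%Z.
Proof.
  intros Hm [<-|[<-|[<-|[]]]]; unfold gamma_digit, D_inter_shift, Dset;
    cbn -[Z.eqb Z.add Z.opp Z.min];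
    repeat (match goal with |- context [Z.eqb ?x ?y] => destruct (Z.eqb_spec x y) end;
            cbn -[Z.eqb Z.add Z.opp Z.min]);
    lia.
Qed.

Lemma Dset_shift_gamma_digit m a z : (0 < m)%Z -> In a [0%Z; m; (- m)%Z] ->
  (In z (Dset m) /\ (z <= m - Z.abs a)%Z) <->
  (In (z + gamma_digit (Dset m) a)%Z (Dset m) /\
   In (z + gamma_digit (Dset m) a - a)%Z (Dset m)).
Proof.
  intros Hm Ha. rewrite gamma_digit_Dset by assumption.
  unfold Dset; simpl in *.
  destruct Ha as [<-|[<-|[<-|[]]]];
    repeat (match goal with |- context [Z.eqb ?x ?y] => destruct (Z.eqb_spec x y) end);
    lia.
Qed.

Section UniqueDifferenceExpansion.

Variables (n : nat) (m : Z) (alpha : C) (a : nat -> Z).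
Hypothesis expansion_a : has_expansion n a alpha.
Hypothesis expansion_a_unique :
  forall a' : nat -> Z, (forall j, In (a' j) [0%Z; m; (- m)%Z]) ->
    has_expansion n a' alpha -> forall j, a' j = a j.

Lemma CnD_inter_translate_digits x :
  CnD n (Dset m) x /\ translate (CnD n (Dset m)) alpha x <->
  exists d : nat -> Z,
    (forall j, In (d j) (Dset m) /\ In (d j - a j)%Z (Dset m)) /\ has_expansion n d x.
Proof.
  split.
  - intros [(d & Hd & Hx) (c & (d' & Hd' & Hc) & ->)].
    assert (Hdiff : has_expansion n (fun j => (d j - d' j)%Z) alpha).
    { replace alpha with (c + alpha - c) by ring. now apply has_expansion_minus. }
    pose proof (expansion_a_unique _ (fun j => Dset_sub m _ _ (Hd j) (Hd' j)) Hdiff)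
      as Ea.
    exists d. split; [|exact Hx].
    intros j. rewrite <- Ea. replace (d j - (d j - d' j))%Z with (d' j) by ring.
    auto.
  - intros (d & Hd & Hx). split.
    + exists d. split; [apply Hd|exact Hx].
    + exists (x - alpha). split; [|ring].
      exists (fun j => (d j - a j)%Z). split; [apply Hd|].
      now apply has_expansion_minus.
Qed.

Hypothesis m_pos : (0 < m)%Z.
Hypothesis digits_a : forall j, In (a j) [0%Z; m; (- m)%Z].
Variable gamma : C.
Hypothesis expansion_gamma :
  has_expansion n (fun j => gamma_digit (Dset m) (a j)) gamma.

Lemma CnD_inter_translate_sub_gamma w :
  (exists x, CnD n (Dset m) x /\ translate (CnD n (Dset m)) alpha x /\ w = x - gamma) <->
  exists z : nat -> Z,
    (forall j, In (z j) (Dset m) /\ (z j <= m - Z.abs (a j))%Z) /\ has_expansion n z w.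
Proof.
  split.
  - intros (x & Hx & Hxa & ->).
    destruct (proj1 (CnD_inter_translate_digits x) (conj Hx Hxa)) as (d & Hd & Hdx).
    exists (fun j => (d j - gamma_digit (Dset m) (a j))%Z). split.
    + intros j. apply Dset_shift_gamma_digit; [assumption|apply digits_a|].
      rewrite Z.sub_add. apply Hd.
    + now apply has_expansion_minus.
  - intros (z & Hz & Hw). exists (w + gamma). split; [|split; [|ring]];
      apply CnD_inter_translate_digits;
      exists (fun j => (z j + gamma_digit (Dset m) (a j))%Z);
      (split; [intros j; apply Dset_shift_gamma_digit; auto|
               now apply has_expansion_plus]).
Qed.

End UniqueDifferenceExpansion.

Theorem lemma5p6 (n : nat) (m : Z) (alpha : C) (a : nat -> Z) :
  (2 <= n)%nat ->
  (2 <= m <= Z.of_nat n ^ 2)%Z ->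
  EnD n (Dset m) alpha ->
  (forall j, In (a j) [0%Z; m; (- m)%Z]) ->
  has_expansion n a alpha ->
  (forall a' : nat -> Z, (forall j, In (a' j) [0%Z; m; (- m)%Z]) ->
     has_expansion n a' alpha -> forall j, a' j = a j) ->
  forall gamma : C,
  has_expansion n (fun j => gamma_digit (Dset m) (a j)) gamma ->
  (forall w : C,
     (exists x, CnD n (Dset m) x /\ translate (CnD n (Dset m)) alpha x /\ w = x - gamma)
     <->
     (exists z : nat -> Z,
        (forall j, In (z j) (Dset m) /\ (z j <= m - Z.abs (a j))%Z) /\
        has_expansion n z w)) /\
  (forall w : C,
     (exists x, CnD n (Dset m) x /\ translate (CnD n (Dset m)) alpha x /\ w = x - gamma) ->
     CnD n (Dset m) w).
Proof.
  intros _ Hm _ Ha Hexp Huniq gamma Hg.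
  assert (Hm0 : (0 < m)%Z) by lia.
  pose proof (CnD_inter_translate_sub_gamma n m alpha a Hexp Huniq Hm0 Ha gamma Hg)
    as Hshift.
  split; [exact Hshift|].
  intros w (z & Hz & Hw)%Hshift. exists z. split; [intros j; apply Hz|exact Hw].
Qed.
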